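(* Let $G\in\mathcal{C}$ and let $N,N'$ be distinct normal subgroups of $G$. If $(H,H,\vartheta)\in\mathcal{L}_N$ and $(H',H',\vartheta')\in\mathcal{L}_{N'}$, then the Shoda pairs $(H,\ker\vartheta)$ and $(H',\ker\vartheta')$ of $G$ are not equivalent, i.e. they do not realize the same primitive central idempotent of $\mathbb{Q}G$.
   Context: All groups are finite. $\mathcal{C}$ is the class of finite groups $G$ such that every subgroup and quotient group of $G$ is either abelian or contains a non-central abelian normal subgroup. $\psi^x(g)=\psi(xgx^{-1})$, $\psi^G$ induced character, $1_N$ trivial character. A Shoda pair of $G$ is $(H,K)$ with $K\unlhd H\le G$, $H/K$ cyclic, and $g\in G$, $[H,g]\cap H\subseteq K$ imply $g\in H$; it realizes the primitive central idempotent $e_{\mathbb{Q}}(\psi^G)$ where $\psi$ is a linear character of $H$ with kernel $K$ and $e_{\mathbb{Q}}(\chi)=\frac{\chi(1)}{|G|}\sum_{\sigma\in\operatorname{Gal}(\mathbb{Q}(\chi)/\mathbb{Q})}\sum_{g\in G}\sigma(\chi(g))g^{-1}$. An $N$-linear character triple of $G$ is $(H,A,\vartheta)$ with $H\le G$, $A\unlhd H$, $\vartheta$ a linear character of $A$ invariant in $H$, and $\ker(\vartheta^G)=N$. For $B\unlhd M\le G$ and linear $\lambda$ on $B$, $\widetilde{\operatorname{Lin}}(M|\lambda)$ is the set of linear characters of $M$ whose restriction to $B$ contains $\lambda$ and whose induction to $G$ has kernel $N$. For each triple a normal subgroup $\mathcal{A}=\mathcal{A}_{(H,A,\vartheta)}$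 of $H$ is fixed, of maximal order among normal subgroups of $H$ containing $\ker\vartheta$ with abelian quotient by $\ker\vartheta$. $\operatorname{Aut}(\mathbb{C}|\vartheta)\times H$ acts on $\widetilde{\operatorname{Lin}}(\mathcal{A}|\vartheta)$ by $(\sigma,h)\cdot\varphi=\sigma\circ\varphi^h$ ($\sigma$ a field automorphism of $\mathbb{C}$ fixing $\mathbb{Q}(\vartheta)$); fix orbit representatives $\mathfrak{Lin}(\mathcal{A}|\vartheta)$. If $H\neq A$, $Cl(H,A,\vartheta)=\{(I_H(\varphi),\mathcal{A},\varphi):\varphi\in\mathfrak{Lin}(\mathcal{A}|\vartheta)\}$, $I_H(\varphi)=\{h\in H:\varphi^h=\varphi\}$; if $H=A$, empty. $\mathcal{G}_N$ is the directed graph of $N$-linear triples reachable from $(G,N,1_N)$, with edges $(u,v)$ whenever $v\in Cl(u)$. $\mathcal{L}_N$ is the set of vertices of $\mathcal{G}_N$ of the form $(H,H,\vartheta)$; for these $(H,\ker\vartheta)$ is a Shoda pair of $G$. *)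

From HB Require Import structures.
From mathcomp Require Import all_boot all_order all_algebra all_fingroup.
From mathcomp Require Import all_solvable all_field all_character.
From Stdlib Require Import ClassicalEpsilon.

Set Implicit Arguments.
Unset Strict Implicit.
Unset Printing Implicit Defensive.

Import GRing.Theory Num.Theory.
Local Open Scope group_scope.
Local Open Scope ring_scope.

Section Defs.

Variable gT : finGroupType.

Definition abelian_or_noncentral_abelian_normal (rT : finGroupType)
    (X : {set rT}) : Prop :=
  abelian X \/
  exists A : {group rT}, [/\ A <| X, abelian A & ~~ (A \subset 'Z(X))].

Definition in_class_C (G : {group gT}) : Prop :=
  (forall H : {group gT}, H \subset G -> abelian_or_noncentral_abelian_normal H)
  /\ (forall K : {group gT}, K <| G ->
        abelian_or_noncentral_abelian_normal (G / K)%g).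

Record triple := Triple {
  tH : {group gT};
  tA : {group gT};
  tth : 'CF(tA)
}.

Definition linear_triple (G : {group gT}) (t : triple) : Prop :=
  [/\ tH t \subset G, tA t <| tH t, tth t \is a linear_char &
      forall h, h \in tH t -> (tth t ^ h)%CF = tth t].

Definition N_linear_triple (G N : {group gT}) (t : triple) : Prop :=
  linear_triple G t /\ cfker ('Ind[G] (tth t)) = N.

(* Specification of the fixed choice A_(H,A,theta): a normal subgroup of H of
   maximal order among normal subgroups of H containing ker theta with abelian
   quotient by ker theta. *)
Definition calA_spec (H K M : {group gT}) : Prop :=
  [/\ M <| H, K \subset M, abelian (M / K)%g &
      forall M' : {group gT}, M' <| H -> K \subset M' -> abelian (M' / K)%g ->
        #|M'| <= #|M| ]%N.

Definition tLin (G N M B : {group gT}) (lambda : 'CF(B)) (phi : 'CF(M)) : Prop :=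
  [/\ phi \is a linear_char, '['Res[B] phi, lambda] != 0 &
      cfker ('Ind[G] phi) = N].

Definition same_orbit (H B M : {group gT}) (theta : 'CF(B))
    (phi1 phi2 : 'CF(M)) : Prop :=
  exists u : {rmorphism algC -> algC}, cfAut u theta = theta /\
  exists2 h, h \in H & phi2 = cfAut u (phi1 ^ h)%CF.

Definition orbit_reps (G N H B M : {group gT}) (theta : 'CF(B))
    (reps : seq 'CF(M)) : Prop :=
  [/\ forall phi, phi \in reps -> tLin G N theta phi,
      forall phi, tLin G N theta phi ->
        exists2 psi, psi \in reps & same_orbit H theta psi phi &
      forall psi1 psi2, psi1 \in reps -> psi2 \in reps ->
        same_orbit H theta psi1 psi2 -> psi1 = psi2].

Section Graph.

Variables (G N : {group gT}) (calA : triple -> {group gT})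
          (reps : forall t : triple, seq 'CF(calA t)).

(* Edge (t, v) of the graph G_N: v \in Cl(t). Cl(t) is empty when H = A. *)
Definition edge (t v : triple) : Prop :=
  (tH t :!=: tA t) /\
  exists2 phi, phi \in reps t &
    v = Triple ('I_(tH t)[phi])%G phi.

Inductive reachable : triple -> Prop :=
  | reach_base : reachable (@Triple G N 1)
  | reach_step t v : reachable t -> edge t v -> reachable v.

Definition in_L (t : triple) : Prop := reachable t /\ tH t = tA t.

End Graph.

(* e_Q(chi), as an element of QG, represented by its coefficient function
   gT -> algC (supported on G): the coefficient of x is
   chi(1)/|G| * sum_{sigma in Gal(Q(chi)/Q)} sigma(chi(x^-1)).
   The sum over Gal(Q(chi)/Q) is computed as the sum over the distinct
   Galois conjugates sigma o chi of chi (sigma |-> sigma o chi is a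
   bijection from Gal(Q(chi)/Q) onto them). *)
Definition is_galois_conjugate (G : {group gT}) (chi psi : 'CF(G)) : Prop :=
  exists u : {rmorphism algC -> algC}, psi = cfAut u chi.

Definition galois_conjugates (G : {group gT}) (chi : 'CF(G)) : seq 'CF(G) :=
  epsilon (inhabits [::])
    (fun s => uniq s /\ forall psi, psi \in s <-> is_galois_conjugate chi psi).

Definition eQ (G : {group gT}) (chi : 'CF(G)) : gT -> algC :=
  fun x => if x \in G then
             chi 1%g / #|G|%:R * \sum_(psi <- galois_conjugates chi) psi (x^-1)%g
           else 0.

End Defs.

Arguments eQ [gT] G chi _.

(* Every vertex of G_N is an N-linear triple, so the character induced from a
   vertex of L_N has kernel N. The kernel of a character chi can be read off
   e_Q(chi): the coefficient of x is a sum of Galois conjugates of chi(x^-1),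
   each of norm at most chi(1), so it equals the coefficient of 1 exactly when
   every conjugate, chi among them, takes the value chi(1) at x^-1. *)

From HB Require Import structures.
From mathcomp Require Import all_boot all_order all_algebra all_fingroup.
From mathcomp Require Import all_solvable all_field all_character.
From Stdlib Require Import ClassicalEpsilon.

Set Implicit Arguments.
Unset Strict Implicit.
Unset Printing Implicit Defensive.

Import GRing.Theory Num.Theory.
Local Open Scope group_scope.
Local Open Scope ring_scope.

Lemma normC_sum_upper_seq (C : numClosedFieldType) (T : eqType) (s : seq T)
    (F G : T -> C) :
  {in s, forall x, `|F x| <= G x} ->
  \sum_(x <- s) F x = \sum_(x <- s) G x -> {in s, forall x, F x = G x}.
Proof.
move=> leFG eq_sum x /(nthP x) [i lt_i_s <-].
rewrite !(big_nth x) !big_mkord in eq_sum.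
apply: (normC_sum_upper _ eq_sum (i := Ordinal lt_i_s) isT) => j _.
exact/leFG/mem_nth.
Qed.

Lemma uniq_seq_of_finite_pred (T : eqType) (P : T -> Prop) (l : seq T) :
  (forall x, P x -> x \in l) ->
  exists s : seq T, uniq s /\ forall x, x \in s <-> P x.
Proof.
move=> Pl; pose b x : bool := excluded_middle_informative (P x).
exists (undup (filter b l)); split=> [|x]; first exact: undup_uniq.
rewrite mem_undup mem_filter /b.
by case: excluded_middle_informative => [Px | nPx]; split=> // _; apply: Pl.
Qed.

Section GaloisConjugates.

Variables (gT : finGroupType) (G : {group gT}) (chi : 'CF(G)).
Hypothesis Nchi : chi \is a character.

(* A Galois conjugate of chi permutes the irreducible constituents of chi
   and keeps their (natural) multiplicities. *)
Lemma galois_conjugates_finite :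
  exists l : seq 'CF(G), forall psi, is_galois_conjugate chi psi -> psi \in l.
Proof.
pose f (g : {ffun Iirr G -> Iirr G}) := \sum_i '[chi, 'chi_i] *: 'chi_(g i).
exists [seq f g | g <- enum {ffun Iirr G -> Iirr G}] => _ [u ->].
apply/mapP; exists [ffun i => aut_Iirr u i]; first by rewrite mem_enum.
rewrite /f {1}(cfun_sum_cfdot chi) raddf_sum; apply: eq_bigr => i _.
by rewrite ffunE aut_IirrE; apply/cfAutZ_Cnat/Cnat_cfdot_char_irr.
Qed.

Lemma galois_conjugatesP psi :
  psi \in galois_conjugates chi <-> is_galois_conjugate chi psi.
Proof.
have [l conj_l] := galois_conjugates_finite.
by have [_ ->] := epsilon_spec (inhabits [::]) _ (uniq_seq_of_finite_pred conj_l).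
Qed.

Lemma cfker_eQ :
  chi != 0 -> cfker chi = [set x in G | eQ G chi x == eQ G chi 1%g].
Proof.
move=> nz_chi; set s := galois_conjugates chi.
have chi_s : chi \in s.
  apply/galois_conjugatesP; exists (idfun : {rmorphism algC -> algC}).
  by apply/cfunP => y; rewrite cfunE.
have cfker_conj psi y : psi \in s -> y \in G ->
    (y \in cfker chi) = (psi y == psi 1%g).
  move/galois_conjugatesP=> [u ->] Gy.
  by rewrite -(cfker_aut u) cfkerEchar ?cfAut_char // inE Gy.
apply/setP => x; rewrite [RHS]inE /eQ group1 invg1.
have [Gx | notGx] /= := boolP (x \in G); last first.
  by apply: contraNF notGx; apply: (subsetP (cfker_sub chi)).
have chi1_neq0 : chi 1%g / #|G|%:R != 0.
  by rewrite mulf_neq0 ?invr_eq0 ?neq0CG ?char1_eq0.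
rewrite (inj_eq (mulfI chi1_neq0)).
apply/idP/eqP => [Kx | eq_sum].
  by apply: eq_big_seq => psi s_psi; apply/eqP; rewrite -(cfker_conj psi) ?groupV.
rewrite -groupV (cfker_conj chi) ?groupV //; apply/eqP.
apply: normC_sum_upper_seq eq_sum _ chi_s => _ /galois_conjugatesP [u ->].
by rewrite char1_ge_norm ?cfAut_char.
Qed.

End GaloisConjugates.

Lemma eQ_inj_cfker (gT : finGroupType) (G : {group gT}) (chi psi : 'CF(G)) :
  chi \is a character -> chi != 0 -> psi \is a character -> psi != 0 ->
  eQ G chi = eQ G psi -> cfker chi = cfker psi.
Proof. by move=> Nchi nz_chi Npsi nz_psi eq_e; rewrite !cfker_eQ ?eq_e. Qed.

Lemma linear_triple_cfInd (gT : finGroupType) (G : {group gT}) t :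
  linear_triple G t ->
  'Ind[G] (tth t) \is a character /\ 'Ind[G] (tth t) != 0.
Proof.
move=> [sHG nAH lin_th _]; have sAG := subset_trans (normal_sub nAH) sHG.
have Nth := lin_charW lin_th.
split; first exact: cfInd_char.
by rewrite cfInd_eq0 // -(char1_eq0 Nth) (lin_char1 lin_th) oner_neq0.
Qed.

Section Graph.

Variables (gT : finGroupType) (G N : {group gT}).
Variables (calA : triple gT -> {group gT}) (reps : forall t, seq 'CF(calA t)).
Hypothesis nNG : N <| G.
Hypothesis calA_normal : forall t, linear_triple G t -> calA t <| tH t.
Hypothesis reps_tLin : forall t, N_linear_triple G N t ->
  forall phi, phi \in reps t -> tLin G N (tth t) phi.

Lemma N_linear_triple_root : N_linear_triple G N (@Triple gT G N 1).
Proof.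
split; first split=> //=.
- exact: cfun1_lin_char.
- by move=> h _; rewrite cfConjg_cfun1.
rewrite /= cfker_Ind ?normal_sub ?cfun1_char ?oner_neq0 // cfker_cfun1.
by apply/eqP; rewrite eqEsubset gcore_sub gcore_max ?normal_norm.
Qed.

Lemma N_linear_triple_edge t v :
  N_linear_triple G N t -> edge reps t v -> N_linear_triple G N v.
Proof.
move=> Nt [_ [phi reps_phi ->]].
have [[sHG _ _ _] _] := Nt.
have [lin_phi _ ker_phi] := reps_tLin Nt reps_phi.
have nCH := calA_normal (proj1 Nt).
split=> //; split=> //=.
- exact: subset_trans (Inertia_sub _ _) sHG.
- by rewrite (normalS _ (Inertia_sub _ _) nCH) ?sub_Inertia ?normal_sub.
- by move=> h /setIP [_ ]; apply: inertiaJ.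
Qed.

Lemma reachable_N_linear_triple t :
  reachable G N reps t -> N_linear_triple G N t.
Proof.
elim=> [|t' v _ Nt']; first exact: N_linear_triple_root.
exact: N_linear_triple_edge.
Qed.

End Graph.

Lemma N_linear_triple_eQ_inj (gT : finGroupType) (G N N' : {group gT}) t t' :
  N_linear_triple G N t -> N_linear_triple G N' t' ->
  eQ G ('Ind[G] (tth t)) = eQ G ('Ind[G] (tth t')) -> N = N'.
Proof.
move=> [lin_t ker_t] [lin_t' ker_t'] eq_e; apply: val_inj.
have [Nind nz_ind] := linear_triple_cfInd lin_t.
have [Nind' nz_ind'] := linear_triple_cfInd lin_t'.
by rewrite /= -ker_t -ker_t'; apply: eQ_inj_cfker.
Qed.

Theorem lemma4 (gT : finGroupType) (G N N' : {group gT})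
    (calA : triple gT -> {group gT})
    (reps : {group gT} -> forall t : triple gT, seq 'CF(calA t)) :
  in_class_C G ->
  (forall t, linear_triple G t -> calA_spec (tH t) (cfker (tth t)) (calA t)) ->
  (forall (M : {group gT}) t, M <| G -> N_linear_triple G M t ->
     orbit_reps G M (tH t) (tth t) (reps M t)) ->
  N <| G -> N' <| G -> (N :!=: N') ->
  forall t t' : triple gT,
    in_L G N (reps N) t -> in_L G N' (reps N') t' ->
    eQ G ('Ind[G] (tth t)) <> eQ G ('Ind[G] (tth t')).
Proof.
move=> _ calA_specP repsP nNG nN'G neqNN' t t' [reach_t _] [reach_t' _] eq_e.
have calA_normal u : linear_triple G u -> calA u <| tH u.
  by case/calA_specP.
have reachable_lin (M : {group gT}) u : M <| G -> reachable G M (reps M) u ->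
    N_linear_triple G M u.
  move=> nMG; apply: reachable_N_linear_triple => // v Nv.
  by have [reps_tLin _ _] := repsP M v nMG Nv.
have eqNN' := N_linear_triple_eQ_inj (reachable_lin N t nNG reach_t)
  (reachable_lin N' t' nN'G reach_t') eq_e.
by rewrite eqNN' eqxx in neqNN'.
Qed.
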